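(* Let $A$ be a 0-dialgebra with involution over a field $\mathbb{F}$. On the vector space $A\oplus A$ define $(a,b)\dashv(c,d)=(a\dashv c-d\vdash b^\ast,\; a^\ast\dashv d+c\vdash b)$, $(a,b)\vdash(c,d)=(a\vdash c-d\dashv b^\ast,\; a^\ast\vdash d+c\dashv b)$ and $(a,b)^\ast=(a^\ast,-b)$. Then $A\oplus A$ with these operations is a 0-dialgebra with involution.
   Context: A 0-dialgebra is a vector space with two bilinear operations $\dashv,\vdash$ satisfying the bar identities $a\dashv(b\dashv c)=a\dashv(b\vdash c)$ and $(a\dashv b)\vdash c=(a\vdash b)\vdash c$ for all $a,b,c$. A 0-dialgebra with involution is a 0-dialgebra with a linear map $a\mapsto a^\ast$ such that $(a^\ast)^\ast=a$, $(a\dashv b)^\ast=b^\ast\vdash a^\ast$ and $(a\vdash b)^\ast=b^\ast\dashv a^\ast$ for all $a,b$. *)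

From HB Require Import structures.
From mathcomp Require Import all_boot all_order all_algebra.
Set Implicit Arguments. Unset Strict Implicit. Unset Printing Implicit Defensive.
Import GRing.Theory.
Local Open Scope ring_scope.

Section Dialg.
Variables (F : fieldType) (V : lmodType F).

Definition bilinear_op (op : V -> V -> V) : Prop :=
  (forall (k : F) (a b c : V), op (k *: a + b) c = k *: op a c + op b c) /\
  (forall (k : F) (a b c : V), op a (k *: b + c) = k *: op a b + op a c).

(* 0-dialgebra: two bilinear operations satisfying the bar identities;
   l = "dashv" (left), r = "vdash" (right). *)
Definition dialgebra0 (l r : V -> V -> V) : Prop :=
  [/\ bilinear_op l, bilinear_op r,
      (forall a b c, l a (l b c) = l a (r b c)) &
      (forall a b c, r (l a b) c = r (r a b) c)].

Definition dialgebra0_inv (l r : V -> V -> V) (s : V -> V) : Prop :=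
  [/\ dialgebra0 l r,
      (forall (k : F) (a b : V), s (k *: a + b) = k *: s a + s b),
      (forall a, s (s a) = a),
      (forall a b, s (l a b) = r (s b) (s a)) &
      (forall a b, s (r a b) = l (s b) (s a))].

Definition dbl_l (l r : V -> V -> V) (s : V -> V) (x y : V * V) : V * V :=
  (l x.1 y.1 - r y.2 (s x.2), l (s x.1) y.2 + r y.1 x.2).
Definition dbl_r (l r : V -> V -> V) (s : V -> V) (x y : V * V) : V * V :=
  (r x.1 y.1 - l y.2 (s x.2), r (s x.1) y.2 + l y.1 x.2).
Definition dbl_s (s : V -> V) (x : V * V) : V * V := (s x.1, - x.2).

End Dialg.

(* Bilinearity
   of the operations and linearity of the involution expand both sides into
   sums of products of elements of A; the anti-automorphism rules and
   s (s a) = a move the involution onto single arguments, and the bar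
   identities of A then identify the two sides term by term, up to
   commutativity of addition. *)
From HB Require Import structures.
From mathcomp Require Import all_boot all_order all_algebra.
Import GRing.Theory.
Set Implicit Arguments. Unset Strict Implicit. Unset Printing Implicit Defensive.
Local Open Scope ring_scope.

Section LinearForm.
Variables (F : fieldType) (U W : lmodType F) (f : U -> W).
Hypothesis f_lin : forall (k : F) (a b : U), f (k *: a + b) = k *: f a + f b.

Lemma lin_formD a b : f (a + b) = f a + f b.
Proof. by have := f_lin 1 a b; rewrite !scale1r. Qed.

Lemma lin_form0 : f 0 = 0.
Proof. by apply: (@addIr _ (f 0)); rewrite -lin_formD !add0r. Qed.

Lemma lin_formZ k a : f (k *: a) = k *: f a.
Proof. by have := f_lin k a 0; rewrite !addr0 lin_form0 addr0. Qed.

Lemma lin_formN a : f (- a) = - f a.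
Proof. by rewrite -scaleN1r lin_formZ scaleN1r. Qed.

End LinearForm.

Section BilinearOp.
Variables (F : fieldType) (V : lmodType F) (op : V -> V -> V).
Hypothesis op_bil : bilinear_op op.

Let op_linl c : forall k a b, op (k *: a + b) c = k *: op a c + op b c.
Proof. by move=> k a b; apply: op_bil.1. Qed.
Let op_linr a : forall k b c, op a (k *: b + c) = k *: op a b + op a c.
Proof. by move=> k b c; apply: op_bil.2. Qed.

Lemma bilinear_opDl a b c : op (a + b) c = op a c + op b c.
Proof. exact: lin_formD (op_linl c) a b. Qed.
Lemma bilinear_opDr a b c : op a (b + c) = op a b + op a c.
Proof. exact: lin_formD (op_linr a) b c. Qed.
Lemma bilinear_opNl a c : op (- a) c = - op a c.
Proof. exact: lin_formN (op_linl c) a. Qed.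
Lemma bilinear_opNr a c : op a (- c) = - op a c.
Proof. exact: lin_formN (op_linr a) c. Qed.
Lemma bilinear_opZl k a c : op (k *: a) c = k *: op a c.
Proof. exact: lin_formZ (op_linl c) k a. Qed.
Lemma bilinear_opZr k a c : op a (k *: c) = k *: op a c.
Proof. exact: lin_formZ (op_linr a) k c. Qed.

End BilinearOp.

Section Doubling.
Variables (F : fieldType) (V : lmodType F) (l r : V -> V -> V) (s : V -> V).
Hypothesis hA : dialgebra0_inv l r s.

Let bil_l : bilinear_op l. Proof. by case: hA => [[]]. Qed.
Let bil_r : bilinear_op r. Proof. by case: hA => [[]]. Qed.
Let s_lin : forall (k : F) (a b : V), s (k *: a + b) = k *: s a + s b.
Proof. by case: hA. Qed.
Let sK a : s (s a) = a. Proof. by case: hA. Qed.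
Let s_l a b : s (l a b) = r (s b) (s a). Proof. by case: hA. Qed.
Let s_r a b : s (r a b) = l (s b) (s a). Proof. by case: hA. Qed.
Let bar_l a b c : l a (l b c) = l a (r b c). Proof. by case: hA => [[]]. Qed.
Let bar_r a b c : r (l a b) c = r (r a b) c. Proof. by case: hA => [[]]. Qed.

Let linE := (bilinear_opDl bil_l, bilinear_opDr bil_l, bilinear_opNl bil_l,
  bilinear_opNr bil_l, bilinear_opZl bil_l, bilinear_opZr bil_l,
  bilinear_opDl bil_r, bilinear_opDr bil_r, bilinear_opNl bil_r,
  bilinear_opNr bil_r, bilinear_opZl bil_r, bilinear_opZr bil_r,
  lin_formD s_lin, lin_formN s_lin, lin_formZ s_lin).

Ltac dbl_simpl := rewrite /dbl_l /dbl_r /dbl_s /=; congr (_, _);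
  rewrite ?(linE, sK, s_l, s_r, bar_l, bar_r) /=;
  rewrite ?(scalerBr, scalerDr, scalerN, opprD, opprK, addrA) //.

Lemma dbl_l_bilinear : bilinear_op (dbl_l l r s).
Proof. by split=> k [a b] [c d] [e f]; dbl_simpl; congr (_ + _); apply: addrAC. Qed.

Lemma dbl_r_bilinear : bilinear_op (dbl_r l r s).
Proof. by split=> k [a b] [c d] [e f]; dbl_simpl; congr (_ + _); apply: addrAC. Qed.

Lemma dbl_s_linear k x y : dbl_s s (k *: x + y) = k *: dbl_s s x + dbl_s s y.
Proof. by case: x y => a b [c d]; dbl_simpl; apply: addrC. Qed.

Lemma dbl_sK x : dbl_s s (dbl_s s x) = x.
Proof. case: x => a b; dbl_simpl. Qed.

Lemma dbl_s_l x y : dbl_s s (dbl_l l r s x y) = dbl_r l r s (dbl_s s y) (dbl_s s x).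
Proof. by case: x y => a b [c d]; dbl_simpl; apply: addrC. Qed.

Lemma dbl_s_r x y : dbl_s s (dbl_r l r s x y) = dbl_l l r s (dbl_s s y) (dbl_s s x).
Proof. by case: x y => a b [c d]; dbl_simpl; apply: addrC. Qed.

Lemma dbl_bar_l x y z : dbl_l l r s x (dbl_l l r s y z) = dbl_l l r s x (dbl_r l r s y z).
Proof. case: x y z => a b [c d] [e f]; dbl_simpl. Qed.

Lemma dbl_bar_r x y z : dbl_r l r s (dbl_l l r s x y) z = dbl_r l r s (dbl_r l r s x y) z.
Proof. case: x y z => a b [c d] [e f]; dbl_simpl. Qed.

End Doubling.

Theorem proposition3p6 (F : fieldType) (V : lmodType F)
    (l r : V -> V -> V) (s : V -> V) :
  dialgebra0_inv l r s ->
  dialgebra0_inv (V := (V * V)%type) (dbl_l l r s) (dbl_r l r s) (dbl_s s).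
Proof.
move=> hA; split; first split.
- exact: (dbl_l_bilinear hA).
- exact: (dbl_r_bilinear hA).
- exact: (dbl_bar_l hA).
- exact: (dbl_bar_r hA).
- exact: (dbl_s_linear hA).
- exact: (dbl_sK hA).
- exact: (dbl_s_l hA).
- exact: (dbl_s_r hA).
Qed.
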